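(* Let $k\ge 2$ and let $p,q$ be real polynomials with $\deg p=k$, $\deg q=k-1$, all of whose roots are real and simple and strictly interlace. For each $\alpha\in\mathbb{R}$ let $p_1(\alpha)<\dots<p_k(\alpha)$ be the roots of $p+\alpha q$ (these are real and simple), let $D_j(\alpha)$ ($1\le j\le k-1$) be the open disk having $[p_j(\alpha),p_{j+1}(\alpha)]$ as a diameter, $D_0(\alpha)$ the open disk having $[p_1(\alpha),p_k(\alpha)]$ as a diameter, and $\Omega_p(\alpha)=\overline{D_0(\alpha)}\setminus\bigcup_{j=1}^{k-1}D_j(\alpha)$. Then all roots of $W(p,q)=p'q-q'p$ lie in $\bigcap_{\alpha\in\mathbb{R}}\Omega_p(\alpha)$.
   Context: ''Strictly interlace'' means that between any two consecutive roots of $p$ there is exactly one root of $q$ and vice versa: $p_1<q_1<p_2<\dots<q_{k-1}<p_k$. A disk ''having a segment $[a,b]$ as a diameter'' is the disk centered at $\frac{a+b}2$ of radius $\frac{b-a}2$. *)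

(* Complex numbers: an arbitrary numClosedFieldType C
   (algebraically closed field with conjugation/order on reals);
   "real" means Num.real. *)
From HB Require Import structures.
From mathcomp Require Import all_boot all_order all_algebra.
Set Implicit Arguments. Unset Strict Implicit. Unset Printing Implicit Defensive.
Import Order.TTheory GRing.Theory Num.Theory.
Local Open Scope ring_scope.

Section Defs.
Variable C : numClosedFieldType.

Definition roots_are (p : {poly C}) (s : seq C) : Prop :=
  forall z, root p z = (z \in s).

Definition real_simple_roots (p : {poly C}) : Prop :=
  forall z, root p z -> (z \is Num.real) && ~~ root p^`() z.

Definition incr_reals (s : seq C) : Prop :=
  all (fun x => x \is Num.real) s /\
  forall i, (i.+1 < size s)%N -> s`_i < s`_i.+1.

Definition strictly_interlace (p q : {poly C}) : Prop :=
  exists (s t : seq C),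
    roots_are p s /\ roots_are q t /\
    all (fun x => x \is Num.real) s /\ all (fun x => x \is Num.real) t /\
    size s = (size t).+1 /\
    (forall i, (i < size t)%N -> s`_i < t`_i /\ t`_i < s`_i.+1).

Definition in_open_disk (a b z : C) : Prop := `|z - (a + b) / 2| < (b - a) / 2.
Definition in_closed_disk (a b z : C) : Prop := `|z - (a + b) / 2| <= (b - a) / 2.

(* Omega_p(alpha) given the increasing list r = [p_1(alpha);...;p_k(alpha)] *)
Definition in_Omega (r : seq C) (z : C) : Prop :=
  in_closed_disk (head 0 r) (last 0 r) z /\
  forall j, (j.+1 < size r)%N -> ~ in_open_disk r`_j r`_j.+1 z.

Definition Wr (p q : {poly C}) : {poly C} := p^`() * q - q^`() * p.

End Defs.

(* Since W(p + a q, q) = W(p, q), it suffices to look at P = p + a q with its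
   roots r_1 < ... < r_k.  Lagrange interpolation of q at the roots of P gives
   W(P, q) = \sum_m c_m (P / (X - r_m))^2, i.e. W(P, q) / P^2 = \sum_m c_m / (X - r_m)^2.
   The same expansion at the roots of p, together with interlacing, shows that
   W(p, q) has a constant sign on the real line, and evaluating at the r_m then
   forces all c_m to have that sign, say positive.  Hence a root z of W is not
   real and \sum_m c_m / (z - r_m)^2 = 0.  Writing c_m / (z - r_m)^2 = b_m (conj z - r_m)^2
   with b_m = c_m / |z - r_m|^4 > 0, the real and imaginary parts of this equation give
   \sum_m b_m (r_m - u) (r_m - v) = ((Re z - u) (Re z - v) + (Im z)^2) \sum_m b_m
   for all u, v.  The right-hand factor is the power of z with respect to the
   circle with diameter [u, v]: it is >= 0 for consecutive roots u, v (every
   product on the left is >= 0) and <= 0 for the extreme roots. *)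

From HB Require Import structures.
From mathcomp Require Import all_boot all_order all_algebra.
From mathcomp Require Import ring.

Set Implicit Arguments.
Unset Strict Implicit.
Unset Printing Implicit Defensive.

Import Order.TTheory GRing.Theory Num.Theory.
Local Open Scope ring_scope.

Section Deflation.
Variables (F : fieldType) (l : F) (s : seq F).
Hypotheses (s_uniq : uniq s) (l_neq0 : l != 0).
Let P := l *: \prod_(x <- s) ('X - x%:P).

Definition deflated (i : nat) : {poly F} :=
  l *: \prod_(j < size s | j != i :> nat) ('X - (s`_j)%:P).

(* The partial-fraction coefficients of q / P, as (deflated i).[s_i] = P^`().[s_i]. *)
Definition lagrange_coef (q : {poly F}) (i : nat) : F :=
  q.[s`_i] / (deflated i).[s`_i].

Lemma horner_deflated i x :
  (deflated i).[x] = l * \prod_(j < size s | j != i :> nat) (x - s`_j).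
Proof.
rewrite hornerZ horner_prod; congr (_ * _).
by apply: eq_bigr => j _; rewrite hornerXsubC.
Qed.

Lemma prod_XsubC_deflated (i : 'I_(size s)) : P = ('X - (s`_i)%:P) * deflated i.
Proof. by rewrite /P (big_nth 0) big_mkord (bigD1 i) //= -scalerAr. Qed.

Lemma deflated_vanish i j : (j < size s)%N -> j != i -> (deflated i).[s`_j] = 0.
Proof.
move=> j_lt ji; rewrite horner_deflated (bigD1 (Ordinal j_lt)) //=.
by rewrite subrr mul0r mulr0.
Qed.

Lemma deflated_neq0 i : (i < size s)%N -> (deflated i).[s`_i] != 0.
Proof.
move=> i_lt; rewrite horner_deflated mulf_neq0 //.
by apply/prodf_neq0 => j ji; rewrite subr_eq0 eq_sym nth_uniq.
Qed.

Lemma size_deflated i : (i < size s)%N -> (size (deflated i) <= size s)%N.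
Proof.
move=> i_lt; have [->|Q0] := eqVneq (deflated i) 0; first by rewrite size_poly0.
have := size_scale_leq l (\prod_(x <- s) ('X - x%:P)).
rewrite size_prod_XsubC -/P (prod_XsubC_deflated (Ordinal i_lt)).
by rewrite size_monicM ?monicXsubC // size_XsubC.
Qed.

Lemma lagrange_expansion (q : {poly F}) : (size q <= size s)%N ->
  q = \sum_(i < size s) lagrange_coef q i *: deflated i.
Proof.
move=> sq; apply/eqP; rewrite -subr_eq0; apply/eqP.
apply: (roots_geq_poly_eq0 _ s_uniq).
- apply/(all_nthP 0) => i i_lt; rewrite /root hornerD hornerN horner_sum.
  rewrite (bigD1 (Ordinal i_lt)) //= big1 => [|j ji].
    by rewrite hornerZ /lagrange_coef divfK ?addr0 ?subrr ?deflated_neq0.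
  by rewrite hornerZ deflated_vanish ?mulr0 // eq_sym.
- rewrite (leq_trans (size_polyD _ _)) // geq_max sq size_polyN.
  rewrite (leq_trans (size_sum _ _ _)) //; apply/bigmax_leqP => i _.
  by rewrite (leq_trans (size_scale_leq _ _)) // size_deflated.
Qed.

Lemma wronskian_lagrange (q : {poly F}) : (size q <= size s)%N ->
  P^`() * q - q^`() * P = \sum_(i < size s) lagrange_coef q i *: deflated i ^+ 2.
Proof.
move=> sq; rewrite {1 2}(lagrange_expansion sq) raddf_sum /=.
rewrite mulr_sumr mulr_suml -sumrB; apply: eq_bigr => i _.
rewrite (prod_XsubC_deflated i); move: (lagrange_coef _ _) (deflated _) => c Q.
by rewrite derivM derivXsubC derivZ -!mul_polyC; ring.
Qed.

Lemma horner_wronskian_lagrange (q : {poly F}) z : (size q <= size s)%N -> z \notin s ->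
  (P^`() * q - q^`() * P).[z] =
  P.[z] ^+ 2 * \sum_(i < size s) lagrange_coef q i / (z - s`_i) ^+ 2.
Proof.
move=> sq zs; rewrite wronskian_lagrange // horner_sum mulr_sumr.
apply: eq_bigr => i _.
have d_neq0 : z - s`_i != 0.
  by rewrite subr_eq0; apply: contraNneq zs => ->; rewrite mem_nth.
rewrite (prod_XsubC_deflated i) hornerZ horner_exp hornerM hornerXsubC.
by field.
Qed.
End Deflation.

Lemma root_deriv_mul_XsubC_sqr (R : comNzRingType) (h : {poly R}) w :
  root (h * ('X - w%:P) ^+ 2)^`() w.
Proof.
by rewrite expr2 mulrA derivM /root hornerD !hornerM hornerXsubC subrr !(mulr0, mul0r, addr0).
Qed.

Lemma size_simple_roots (C : numClosedFieldType) (p : {poly C}) (s : seq C) :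
  p != 0 -> uniq s -> roots_are p s -> (forall z, root p z -> ~~ root p^`() z) ->
  size p = (size s).+1.
Proof.
move=> p0 s_uniq ps p_simple.
have s_roots : all (root p) s by apply/allP => z; rewrite ps.
have [g def_p] := uniq_roots_prod_XsubC s_roots (etrans (uniq_rootsE s) s_uniq).
have g0 : g != 0 by apply: contraNneq p0 => g0; rewrite def_p g0 mul0r.
rewrite def_p size_Mmonic ?monic_prod_XsubC // size_prod_XsubC.
have [-> //|/closed_rootP[w gw]] := eqVneq (size g) 1%N.
have w_s : w \in s by rewrite -ps def_p rootM gw.
have [h def_g] := factor_theorem g w gw.
have : root p^`() w.
  rewrite def_p def_g (big_rem w w_s) /=.
  set r := \prod_(y <- _) _; set X_w := 'X - w%:P.
  have -> : h * X_w * (X_w * r) = (h * r) * X_w ^+ 2 by ring.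
  exact: root_deriv_mul_XsubC_sqr.
by rewrite (negPf (p_simple w _)) // ps.
Qed.

Lemma roots_are_prod_XsubC (C : numClosedFieldType) (p : {poly C}) (s : seq C) :
  size p = (size s).+1 -> uniq s -> roots_are p s ->
  p = lead_coef p *: \prod_(x <- s) ('X - x%:P).
Proof.
move=> size_p s_uniq ps; apply: all_roots_prod_XsubC => //.
  by apply/allP => x; rewrite ps.
by rewrite uniq_rootsE.
Qed.

Lemma signed_prod_gt0 (R : numDomainType) (f : nat -> R) m n : (m <= n)%N ->
  (forall j, (j < m)%N -> 0 < f j) -> (forall j, (m <= j < n)%N -> f j < 0) ->
  0 < (-1) ^+ (n - m) * \prod_(j < n) f j.
Proof.
move=> + f_pos f_neg; elim: n f_neg => [|n IHn] f_neg.
  by rewrite leqn0 => /eqP ->; rewrite big_ord0 mulr1 expr0 ltr01.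
rewrite leq_eqVlt ltnS => /orP[/eqP mn|mn].
  by rewrite mn subnn expr0 mul1r; apply: prodr_gt0 => j _; rewrite f_pos // mn.
rewrite big_ord_recr /= subSn // exprSr mulrACA; apply: mulr_gt0.
  by apply: IHn => // j /andP[mj jn]; rewrite f_neg // mj ltnW.
by rewrite mulN1r oppr_gt0 f_neg // mn /=.
Qed.

Section WronskianSign.
Variables (R : numFieldType) (l sg : R) (s : seq R) (q : {poly R}).
Hypotheses (s_uniq : uniq s) (s_real : all (fun x => x \is Num.real) s).
Hypotheses (l_real : l \is Num.real) (l_neq0 : l != 0) (size_q : (size q <= size s)%N).
Let P := l *: \prod_(x <- s) ('X - x%:P).

Lemma deflated_real i x : x \is Num.real -> (deflated l s i).[x] \is Num.real.
Proof.
move=> x_real; rewrite horner_deflated rpredM // rpred_prod // => j _.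
by rewrite rpredB // (allP s_real) // mem_nth.
Qed.

Let sg_wronskian x : sg * (P^`() * q - q^`() * P).[x] =
  \sum_(i < size s) sg * lagrange_coef l s q i * (deflated l s i).[x] ^+ 2.
Proof.
rewrite wronskian_lagrange // horner_sum mulr_sumr.
by apply: eq_bigr => i _; rewrite hornerZ horner_exp mulrA.
Qed.

Lemma wronskian_gt0_lagrange_coef : (0 < size s)%N ->
  (forall x, x \is Num.real -> 0 < sg * (P^`() * q - q^`() * P).[x]) <->
  (forall i, (i < size s)%N -> 0 < sg * lagrange_coef l s q i).
Proof.
move=> s_gt0; split=> [W_gt0 i i_lt | c_gt0 x x_real].
  have := W_gt0 _ (allP s_real _ (mem_nth 0 i_lt)).
  rewrite sg_wronskian (bigD1 (Ordinal i_lt)) //= big1 ?addr0 => [|j ji].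
    rewrite pmulr_lgt0 // real_exprn_even_gt0 ?deflated_real ?(allP s_real) ?mem_nth //.
    by rewrite deflated_neq0 ?orbT.
  by rewrite deflated_vanish ?expr0n ?mulr0 // eq_sym.
have [i Qi_neq0] : exists i : 'I_(size s), (deflated l s i).[x] != 0.
  have [x_s|x_s] := boolP (x \in s).
    have x_idx : (index x s < size s)%N by rewrite index_mem.
    by exists (Ordinal x_idx); rewrite /= -{2}(nth_index 0 x_s) deflated_neq0.
  exists (Ordinal s_gt0); rewrite horner_deflated mulf_neq0 //.
  by apply/prodf_neq0 => j _; rewrite subr_eq0; apply: contraNneq x_s => ->; rewrite mem_nth.
rewrite sg_wronskian (bigD1 i) //=; apply: ltr_wpDr.
  apply: sumr_ge0 => j _; apply: mulr_ge0; first exact/ltW/c_gt0.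
  by rewrite real_exprn_even_ge0 ?deflated_real.
by rewrite pmulr_rgt0 ?c_gt0 // real_exprn_even_gt0 ?deflated_real // Qi_neq0 orbT.
Qed.
End WronskianSign.

Section SortedNth.
Variables (d : Order.disp_t) (T : porderType d) (x0 : T) (s : seq T).
Hypothesis s_sorted : sorted <%O s.

Lemma lt_sorted_le_nth i j : (i <= j)%N -> (j < size s)%N ->
  (nth x0 s i <= nth x0 s j)%O.
Proof.
by move=> ij j_lt; rewrite (lt_sorted_leq_nth x0 s_sorted) // inE (leq_ltn_trans ij).
Qed.

Lemma lt_sorted_lt_nth i j : (i < j)%N -> (j < size s)%N ->
  (nth x0 s i < nth x0 s j)%O.
Proof.
by move=> ij j_lt; rewrite (lt_sorted_ltn_nth x0 s_sorted) // inE (ltn_trans ij).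
Qed.
End SortedNth.

Lemma interlace_sorted d (T : porderType d) (x0 : T) (s t : seq T) :
  size s = (size t).+1 ->
  (forall i, (i < size t)%N -> (nth x0 s i < nth x0 t i)%O /\ (nth x0 t i < nth x0 s i.+1)%O) ->
  sorted <%O s /\ sorted <%O t.
Proof.
move=> size_s interlace; split; apply/(sortedP x0) => i.
  by rewrite size_s ltnS => /interlace[/lt_trans]; apply.
move=> i_lt; have [_ lt_ts] := interlace _ (ltnW i_lt).
by have [lt_st _] := interlace _ i_lt; exact: lt_trans lt_ts lt_st.
Qed.

Section Interlacing.
Variables (R : numFieldType) (lp lq : R) (s t : seq R).
Hypotheses (s_sorted : sorted <%R s) (size_s : size s = (size t).+1).
Hypothesis interlace : forall i, (i < size t)%N -> s`_i < t`_i /\ t`_i < s`_i.+1.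
Hypotheses (lp_neq0 : lp != 0) (lq_real : lq \is Num.real) (lq_neq0 : lq != 0).

Let s_le i j : (i <= j)%N -> (j < size s)%N -> s`_i <= s`_j.
Proof. exact: lt_sorted_le_nth. Qed.

Let s_lt i j : (i < j)%N -> (j < size s)%N -> s`_i < s`_j.
Proof. exact: lt_sorted_lt_nth. Qed.

Lemma interlacing_lagrange_coef_gt0 i : (i < size s)%N ->
  0 < lq * lp * lagrange_coef lp s (lq *: \prod_(x <- t) ('X - x%:P)) i.
Proof.
(* q(s_i) and P'(s_i) both have sign (-1)^(size t - i) relative to their leading
   coefficients: that many roots of each product lie to the right of s_i. *)
move=> i_lt; have i_le : (i <= size t)%N by rewrite -ltnS -size_s.
have q_si : (lq *: \prod_(x <- t) ('X - x%:P)).[s`_i] =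
    lq * \prod_(j < size t) (s`_i - t`_j).
  rewrite hornerZ horner_prod (big_nth 0) big_mkord; congr (_ * _).
  by apply: eq_bigr => j _; rewrite hornerXsubC.
have Q_si : (deflated lp s i).[s`_i] =
    lp * \prod_(j < size s) (if j != i :> nat then s`_i - s`_j else 1).
  by rewrite horner_deflated -big_mkcond.
have t_sign : 0 < (-1) ^+ (size t - i) * \prod_(j < size t) (s`_i - t`_j).
  apply: (signed_prod_gt0 (f := fun j => s`_i - t`_j)) => // j; rewrite ?subr_gt0 ?subr_lt0.
    move=> ji; have j_lt : (j < size t)%N := leq_trans ji i_le.
    by rewrite (lt_le_trans (proj2 (interlace j_lt))) // s_le.
  case/andP=> ij j_lt; rewrite (le_lt_trans _ (proj1 (interlace j_lt))) // s_le //.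
  by rewrite size_s ltnW.
have s_sign : 0 < (-1) ^+ (size t - i) *
    \prod_(j < size s) (if j != i :> nat then s`_i - s`_j else 1).
  rewrite -subSS -size_s.
  apply: (signed_prod_gt0 (f := fun j => if j != i then s`_i - s`_j else 1)) => // j.
    rewrite ltnS leq_eqVlt => /orP[/eqP->|ji]; first by rewrite eqxx ltr01.
    by rewrite neq_ltn ji subr_gt0 s_lt.
  by case/andP=> ij j_lt; rewrite (gtn_eqF ij) subr_lt0 s_lt.
rewrite /lagrange_coef q_si Q_si; move: t_sign s_sign.
set u := (-1) ^+ _; set A := \prod_(j < _) _; set B := \prod_(j < _) _.
move=> uA_gt0 uB_gt0; have u_neq0 : u != 0 by rewrite expf_neq0 // oppr_eq0 oner_eq0.
have B_neq0 : B != 0 by apply: contraTneq uB_gt0 => ->; rewrite mulr0 ltxx.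
have -> : lq * lp * (lq * A / (lp * B)) = lq ^+ 2 * ((u * A) / (u * B)).
  by field; rewrite B_neq0 u_neq0 lp_neq0.
by rewrite mulr_gt0 ?divr_gt0 // real_exprn_even_gt0.
Qed.

Lemma interlacing_wronskian_gt0 (p q : {poly R}) :
  p = lp *: \prod_(x <- s) ('X - x%:P) -> q = lq *: \prod_(x <- t) ('X - x%:P) ->
  all (fun x => x \is Num.real) s -> lp \is Num.real ->
  forall x, x \is Num.real -> 0 < lq * lp * (p^`() * q - q^`() * p).[x].
Proof.
move=> -> -> s_real lp_real; rewrite wronskian_gt0_lagrange_coef ?lt_sorted_uniq //.
- exact: interlacing_lagrange_coef_gt0.
- apply: leq_trans (size_scale_leq _ _) _.
  by rewrite size_prod_XsubC size_s.
- by rewrite size_s.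
Qed.
End Interlacing.

Section Disks.
Variable C : numClosedFieldType.
Implicit Types (a b u v z : C) (r : seq C).

Lemma disk_power a b z : a \is Num.real -> b \is Num.real ->
  `|z - (a + b) / 2| ^+ 2 - ((b - a) / 2) ^+ 2 =
  ('Re z - a) * ('Re z - b) + 'Im z ^+ 2.
Proof.
move=> a_real b_real.
have -> : z - (a + b) / 2 = ('Re z - (a + b) / 2) + 'i * 'Im z.
  by rewrite {1}[z]Crect; ring.
rewrite normC2_rect ?Creal_Im ?rpredB ?rpredM ?rpredD ?rpredV ?rpred_nat ?Creal_Re //.
by field.
Qed.

Lemma in_closed_diskE a b z : a \is Num.real -> b \is Num.real -> a <= b ->
  in_closed_disk a b z <-> ('Re z - a) * ('Re z - b) + 'Im z ^+ 2 <= 0.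
Proof.
move=> a_real b_real ab; rewrite /in_closed_disk -disk_power // subr_le0.
by rewrite ler_sqr ?nnegrE ?divr_ge0 ?subr_ge0.
Qed.

Lemma in_open_diskE a b z : a \is Num.real -> b \is Num.real -> a <= b ->
  in_open_disk a b z <-> ('Re z - a) * ('Re z - b) + 'Im z ^+ 2 < 0.
Proof.
move=> a_real b_real ab; rewrite /in_open_disk -disk_power // subr_lt0.
by rewrite ltr_sqr ?nnegrE ?divr_ge0 ?subr_ge0.
Qed.

Lemma invC_sqr_rect u v : u \is Num.real -> v \is Num.real -> u + 'i * v != 0 ->
  (u + 'i * v) ^- 2 = ((u ^+ 2 - v ^+ 2) - 'i * (2 * u * v)) / (u ^+ 2 + v ^+ 2) ^+ 2.
Proof.
move=> u_real v_real _; rewrite -exprVn invC_rect // expr_div_n.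
by congr (_ / _); rewrite sqrrB exprMn sqrCi; ring.
Qed.

Lemma sum_inv_sqr_eq0_weights r (a : nat -> C) z :
  all (fun x => x \is Num.real) r -> (forall m, (m < size r)%N -> 0 < a m) ->
  z \notin Num.real -> \sum_(m < size r) a m / (z - r`_m) ^+ 2 = 0 ->
  exists2 b : nat -> C, (forall m, (m < size r)%N -> 0 < b m) &
    forall u v, \sum_(m < size r) b m * ((r`_m - u) * (r`_m - v)) =
      (('Re z - u) * ('Re z - v) + 'Im z ^+ 2) * \sum_(m < size r) b m.
Proof.
move=> r_real a_gt0 z_nreal sum_eq0.
set x := 'Re z; set y := 'Im z.
have y_neq0 : y != 0 by apply: contraNneq z_nreal => /Creal_ImP.
pose e m := x - r`_m.
have e_real m : (m < size r)%N -> e m \is Num.real.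
  by move=> m_lt; rewrite rpredB ?Creal_Re // (allP r_real) ?mem_nth.
pose b m := a m / (e m ^+ 2 + y ^+ 2) ^+ 2.
have b_gt0 m : (m < size r)%N -> 0 < b m.
  move=> m_lt; rewrite divr_gt0 ?a_gt0 // exprn_gt0 // ltr_wpDl //.
    by rewrite real_exprn_even_ge0 ?e_real.
  by rewrite real_exprn_even_gt0 ?Creal_Im ?y_neq0 ?orbT.
exists b => // u v.
have b_real m : (m < size r)%N -> b m \is Num.real by move/b_gt0/gtr0_real.
pose A := \sum_(m < size r) b m * (e m ^+ 2 - y ^+ 2).
pose E := \sum_(m < size r) b m * e m.
have A_real : A \is Num.real.
  by apply: rpred_sum => m _; rewrite rpredM ?rpredB ?rpredX ?b_real ?e_real ?Creal_Im.
have E_real : E \is Num.real by apply: rpred_sum => m _; rewrite rpredM ?b_real ?e_real.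
have sum_rect : \sum_(m < size r) a m / (z - r`_m) ^+ 2 = A + 'i * (- (2 * y) * E).
  rewrite /A /E !mulr_sumr -big_split /=; apply: eq_bigr => m _.
  have zr : z - r`_m = e m + 'i * y by rewrite {1}[z]Crect /e; ring.
  have zr_neq0 : e m + 'i * y != 0.
    by rewrite -zr subr_eq0; apply: contraNneq z_nreal => ->; rewrite (allP r_real) ?mem_nth.
  by rewrite zr invC_sqr_rect ?Creal_Im ?e_real // /b; ring.
have B_real : - (2 * y) * E \is Num.real.
  by rewrite rpredM ?rpredN ?rpredM ?rpred_nat ?Creal_Im.
have A0 : A = 0.
  by have := congr1 (@Re _) sum_rect; rewrite sum_eq0 raddf0 Re_rect.
have E0 : E = 0.
  have := congr1 (@Im _) sum_rect; rewrite sum_eq0 raddf0 Im_rect // => /esym/eqP.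
  by rewrite mulf_eq0 oppr_eq0 mulf_eq0 pnatr_eq0 (negPf y_neq0) => /eqP.
rewrite (eq_bigr (fun m : 'I_(size r) => ((x - u) * (x - v) + y ^+ 2) * b m
    + b m * (e m ^+ 2 - y ^+ 2) - (2 * x - u - v) * (b m * e m))).
  by rewrite !big_split /= sumrN -!mulr_sumr -/A -/E A0 E0 mulr0 subr0 addr0.
by move=> m _; rewrite /e; ring.
Qed.

Lemma in_Omega_of_weights r z (b : nat -> C) :
  sorted <%R r -> all (fun x => x \is Num.real) r -> (0 < size r)%N ->
  (forall m, (m < size r)%N -> 0 < b m) ->
  (forall u v, \sum_(m < size r) b m * ((r`_m - u) * (r`_m - v)) =
     (('Re z - u) * ('Re z - v) + 'Im z ^+ 2) * \sum_(m < size r) b m) ->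
  in_Omega r z.
Proof.
move=> r_sorted r_real r_gt0 b_gt0 b_quad.
have r_nth_real m : (m < size r)%N -> r`_m \is Num.real.
  by move=> m_lt; rewrite (allP r_real) ?mem_nth.
have sum_b_gt0 : 0 < \sum_(m < size r) b m.
  rewrite (bigD1 (Ordinal r_gt0)) //=; apply: ltr_wpDr; last exact: b_gt0.
  by apply: sumr_ge0 => m _; exact/ltW/b_gt0.
have last_lt : ((size r).-1 < size r)%N by rewrite prednK.
split.
  rewrite -nth0 -nth_last in_closed_diskE ?r_nth_real ?lt_sorted_le_nth //.
  rewrite -(pmulr_lle0 _ sum_b_gt0) -b_quad; apply: sumr_le0 => m _.
  apply: mulr_ge0_le0; first exact/ltW/b_gt0.
  apply: mulr_ge0_le0; rewrite ?subr_ge0 ?subr_le0 lt_sorted_le_nth //.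
  by rewrite -ltnS prednK.
move=> j j_lt; have j_lt' : (j < size r)%N := ltnW j_lt.
rewrite in_open_diskE ?r_nth_real ?lt_sorted_le_nth //.
rewrite -(pmulr_llt0 _ sum_b_gt0) -b_quad le_gtF //; apply: sumr_ge0 => m _.
apply: mulr_ge0; first exact/ltW/b_gt0.
have [mj|jm] := leqP m j.
  by apply: mulr_le0; rewrite subr_le0 lt_sorted_le_nth // ltnW.
by apply: mulr_ge0; rewrite subr_ge0 lt_sorted_le_nth // ltnW.
Qed.
End Disks.

Section WronskianRoots.
Variables (C : numClosedFieldType) (l sg : C) (r : seq C) (q : {poly C}).
Hypotheses (r_sorted : sorted <%R r) (r_real : all (fun x => x \is Num.real) r).
Hypotheses (l_real : l \is Num.real) (l_neq0 : l != 0) (size_q : (size q <= size r)%N).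
Let P := l *: \prod_(x <- r) ('X - x%:P).

Lemma wronskian_root_in_Omega z : (0 < size r)%N ->
  (forall x, x \is Num.real -> 0 < sg * (P^`() * q - q^`() * P).[x]) ->
  (P^`() * q - q^`() * P).[z] = 0 -> in_Omega r z.
Proof.
move=> r_gt0 W_gt0 Wz.
have r_uniq := lt_sorted_uniq r_sorted.
have c_gt0 := (wronskian_gt0_lagrange_coef sg r_uniq r_real l_real l_neq0 size_q r_gt0).1 W_gt0.
have z_nreal : z \notin Num.real by apply/negP => /W_gt0; rewrite Wz mulr0 ltxx.
have z_r : z \notin r by apply: contraNN z_nreal => /(allP r_real).
have Pz_neq0 : P.[z] != 0 by rewrite -rootE rootZ // root_prod_XsubC.
have : \sum_(m < size r) sg * lagrange_coef l r q m / (z - r`_m) ^+ 2 = 0.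
  move: Wz; rewrite horner_wronskian_lagrange // => /eqP.
  rewrite mulf_eq0 expf_eq0 (negPf Pz_neq0) andbF /= => /eqP sum_eq0.
  rewrite -[RHS](mulr0 sg) -[X in sg * X]sum_eq0 mulr_sumr.
  by apply: eq_bigr => m _; rewrite -mulrA.
case/(sum_inv_sqr_eq0_weights r_real c_gt0 z_nreal) => b b_gt0 b_quad.
exact: in_Omega_of_weights b_gt0 b_quad.
Qed.
End WronskianRoots.

Lemma Wr_addl_mulC (C : numClosedFieldType) (p q : {poly C}) c :
  Wr (p + c%:P * q) q = Wr p q.
Proof. by rewrite /Wr derivD deriv_mulC; ring. Qed.

Theorem mainTheorem2 (C : numClosedFieldType) (k : nat) (p q : {poly C}) :
  (2 <= k)%N ->
  p \is a polyOver Num.real -> q \is a polyOver Num.real ->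
  size p = k.+1 -> size q = k ->
  real_simple_roots p -> real_simple_roots q ->
  strictly_interlace p q ->
  forall z : C, root (Wr p q) z ->
  forall (alpha : C) (r : seq C), alpha \is Num.real ->
    roots_are (p + alpha%:P * q) r -> incr_reals r -> size r = k ->
    in_Omega r z.
Proof.
move=> k_ge2 p_real q_real size_p size_q p_simple _.
case=> s [t [ps [qt [s_real [_ [size_st interlace]]]]]] z /rootP Wz alpha r _ Pr.
case=> r_real /(sortedP 0) r_sorted size_r.
have [s_sorted t_sorted] := interlace_sorted size_st interlace.
have lead_real (f : {poly C}) : f \is a polyOver Num.real -> lead_coef f \is Num.real.
  by move=> f_real; rewrite lead_coefE (polyOverP f_real).
have p_neq0 : p != 0 by rewrite -size_poly_eq0 size_p.
have lq_neq0 : lead_coef q != 0 by rewrite lead_coef_eq0 -size_poly_eq0 size_q -(subnKC k_ge2).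
have size_s : size s = k.
  apply/eq_add_S; rewrite -size_p (size_simple_roots p_neq0 (lt_sorted_uniq s_sorted) ps) //.
  by move=> w /p_simple /andP[].
have p_eq : p = lead_coef p *: \prod_(x <- s) ('X - x%:P).
  by apply: roots_are_prod_XsubC; rewrite ?size_s ?lt_sorted_uniq.
have q_eq : q = lead_coef q *: \prod_(x <- t) ('X - x%:P).
  by apply: roots_are_prod_XsubC; rewrite ?size_q -?size_s ?lt_sorted_uniq.
have W_gt0 x : x \is Num.real -> 0 < lead_coef q * lead_coef p * (Wr p q).[x].
  apply: (interlacing_wronskian_gt0 s_sorted size_st interlace _ (lead_real q q_real)) => //.
  - by rewrite lead_coef_eq0.
  - exact: lead_real.
have size_Pq : (size (alpha%:P * q)%R < size p)%N.
  by rewrite mul_polyC (leq_ltn_trans (size_scale_leq _ _)) // size_q size_p.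
have P_eq : p + alpha%:P * q = lead_coef p *: \prod_(x <- r) ('X - x%:P).
  rewrite -(lead_coefDl size_Pq); apply: roots_are_prod_XsubC; rewrite ?lt_sorted_uniq //.
  by rewrite size_polyDl // size_p size_r.
rewrite -(Wr_addl_mulC p q alpha) P_eq /Wr in W_gt0 Wz.
apply: (wronskian_root_in_Omega r_sorted) W_gt0 Wz; rewrite ?size_q ?size_r //.
- exact: lead_real.
- by rewrite lead_coef_eq0.
- exact: leq_trans k_ge2.
Qed.
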